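(* Let $G$ be a dicyclic group of order $2n\ge 6$. Then there exists a $G$-regular $1$-factorization of $K_{2n}$ together with a complete set of rainbow spanning trees.
   Context: A dicyclic group of order $4s$, $s\ge2$, is $\langle a,b: a^{2s}=1,\ b^2=a^s,\ b^{-1}ab=a^{-1}\rangle$. Vertices of $K_{2n}$ are identified with elements of $G$, with $G$ acting by right multiplication on vertices and edges. A $1$-factorization of $K_{2n}$ is $G$-regular if $G$ (acting sharply transitively on vertices) maps each of its $1$-factors to a $1$-factor of it. A rainbow spanning tree is a spanning tree with exactly one edge in each $1$-factor; a complete set of rainbow spanning trees is a set of such trees partitioning the edge set of $K_{2n}$. *)

From mathcomp Require Import all_boot all_fingroup.
Set Implicit Arguments. Unset Strict Implicit. Unset Printing Implicit Defensive.
Local Open Scope group_scope.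

Section Graphs.
Variable gT : finGroupType.

Definition Kedges : {set {set gT}} := [set e : {set gT} | #|e| == 2].

Definition adj (E : {set {set gT}}) : rel gT :=
  fun x y => (x != y) && ([set x; y] \in E).

Definition one_factor (M : {set {set gT}}) : Prop :=
  M \subset Kedges /\ forall x : gT, #|[set e in M | x \in e]| = 1%N.

Definition one_factorization (F : {set {set {set gT}}}) : Prop :=
  partition F Kedges /\ forall M, M \in F -> one_factor M.

Definition rtrans (M : {set {set gT}}) (g : gT) : {set {set gT}} :=
  [set e :* g | e in M].

(* G-regular: G acts sharply transitively on vertices (right multiplication)
   and maps each 1-factor to a 1-factor of the factorization. *)
Definition G_regular (F : {set {set {set gT}}}) : Prop :=
  forall M g, M \in F -> rtrans M g \in F.

Definition connected (T : {set {set gT}}) : Prop :=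
  forall x y : gT, connect (adj T) x y.

Definition acyclic (T : {set {set gT}}) : Prop :=
  forall c : seq gT, (3 <= size c)%N -> ~ ucycle (adj T) c.

Definition spanning_tree (T : {set {set gT}}) : Prop :=
  T \subset Kedges /\ connected T /\ acyclic T.

Definition rainbow_spanning_tree (F : {set {set {set gT}}}) (T : {set {set gT}}) : Prop :=
  spanning_tree T /\ forall M, M \in F -> #|T :&: M| = 1%N.

Definition complete_rainbow_set (F : {set {set {set gT}}}) (S : {set {set {set gT}}}) : Prop :=
  partition S Kedges /\ forall T, T \in S -> rainbow_spanning_tree F T.

End Graphs.

Definition dicyclic (gT : finGroupType) (s : nat) : Prop :=
  #|gT| = (4 * s)%N /\
  exists a b : gT, <<[set a; b]>> = [set: gT] /\
    a ^+ (2 * s)%N = 1 /\ b ^+ 2 = a ^+ s /\ b^-1 * a * b = a^-1.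

From mathcomp Require Import all_boot all_fingroup zify.
Set Implicit Arguments. Unset Strict Implicit. Unset Printing Implicit Defensive.

(* Write the dicyclic group as <a> u b<a> and give x = b^e a^i (i < 2s) the
   coordinates (e, i).  The 4s - 1 one-factors are described by fixed-point-free
   involutions [mate l] of the coordinates, one for each label l; every pair of
   distinct vertices is swapped by exactly one of them, and right multiplication by
   a or by b permutes them, so the factorization is G-regular.  Two spanning trees
   B_false and B_true, each given by a parent function along which a depth strictly
   decreases, meet every 1-factor; having as many edges as there are 1-factors,
   they meet each exactly once.  By regularity the translates B_(s <= k) a^k,
   k < 2s, are rainbow as well; they cover all edges of K_4s, and since
   2s (4s - 1) = C(4s, 2) they partition them. *)

Lemma eq_set2 (T : finType) (x y u w : T) : u != w -> [set x; y] = [set u; w] ->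
  (x = u /\ y = w) \/ (x = w /\ y = u).
Proof.
move=> uw E.
have: u \in [set x; y] by rewrite E set21.
have: w \in [set x; y] by rewrite E set22.
have: x \in [set u; w] by rewrite -E set21.
have: y \in [set u; w] by rewrite -E set22.
rewrite !inE => /orP[] /eqP -> /orP[] /eqP -> ; try by [left | right].
all: by rewrite ?orbb => /eqP E1 /eqP E2; rewrite ?E1 ?E2 eqxx in uw.
Qed.

Section Partitions.
Variable T : finType.

Lemma partition_meet_card1 (P : {set {set T}}) (D B0 : {set T}) :
  partition P D -> B0 \subset D -> #|B0| = #|P| ->
  (forall B, B \in P -> B0 :&: B != set0) -> forall B, B \in P -> #|B0 :&: B| = 1%N.
Proof.
move=> /and3P [/eqP covP trivP _] B0D cardB0 meetB0.
have ge1 B : B \in P -> (0 < #|B0 :&: B|)%N by move/meetB0; rewrite card_gt0.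
have sumB0 : #|B0| = (\sum_(B in P) #|B0 :&: B|)%N.
  have indE (A : {set T}) : (\sum_(x in A) (if x \in B0 then 1 else 0) = #|B0 :&: A|)%N.
    by rewrite -big_mkcondr sum1dep_card; apply: eq_card => x; rewrite !inE andbC.
  rewrite -{1}(setIidPl B0D) -covP -indE (big_trivIset _ trivP).
  by apply: eq_bigr => B _; apply: indE.
move=> B BP; apply/eqP; rewrite eqn_leq ge1 // andbT.
have : (#|B0 :&: B| + #|P :\ B| <= #|P|)%N.
  rewrite -cardB0 sumB0 (bigD1 B) //= leq_add2l -sum1_card.
  rewrite [X in (_ <= X)%N](eq_bigl (mem (P :\ B))) => [|B']; last by rewrite !inE andbC.
  by apply: leq_sum => B' /setD1P [_ /ge1].
by rewrite (cardsD1 B P) BP; lia.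
Qed.

Variables (K : finType) (f : K -> {set T}) (D : {set T}).
Hypothesis f_sub : forall k, f k \subset D.
Hypothesis f_neq0 : forall k, f k != set0.
Hypothesis f_cover : forall x, x \in D -> exists k, x \in f k.
Hypothesis sum_card_f : (\sum_k #|f k| = #|D|)%N.

Lemma partition_of_cover : partition [set f k | k : K] D.
Proof.
have cov : cover [set f k | k : K] = D.
  apply/eqP; rewrite eqEsubset; apply/andP; split.
    by apply/subsetP => x /bigcupP [B /imsetP [k _ ->]]; apply/subsetP.
  by apply/subsetP => x /f_cover [k xk]; apply/bigcupP; exists (f k); rewrite ?imset_f.
apply/and3P; split; first by rewrite cov.
- rewrite /trivIset eqn_leq; apply/andP; split; last first.
    by have := leq_card_cover [set f k | k : K]; case.
  rewrite cov -sum_card_f (partition_big_imset f) /=.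
  by apply: leq_sum => B /imsetP [k _ ->]; rewrite (bigD1 k) //= leq_addr.
- by apply/imsetP => [[k _ E]]; move: (f_neq0 k); rewrite -E eqxx.
Qed.

End Partitions.

Section Translations.
Variable gT : finGroupType.
Implicit Types (M T : {set {set gT}}) (F : {set {set {set gT}}}).
Local Open Scope group_scope.

Lemma gen_ind_setT (A : {set gT}) (P : pred gT) :
  <<A>> = [set: gT] -> P 1 -> (forall g h, P g -> P h -> P (g * h)) ->
  {in A, forall g, P g} -> forall g, P g.
Proof.
move=> genA P1 PM PA g.
have gP : group_set [set g | P g].
  by apply/group_setP; split=> [|x y]; rewrite !inE //; apply: PM.
have : <<A>> \subset Group gP by rewrite gen_subG; apply/subsetP => x /PA; rewrite inE.
by rewrite genA => /subsetP /(_ g (in_setT g)); rewrite inE.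
Qed.

Lemma rcoset_set2 (x y g : gT) : [set x; y] :* g = [set x * g; y * g].
Proof. by rewrite -rcosetE /rcoset imsetU1 imset_set1. Qed.

Lemma rtrans1 M : rtrans M 1 = M.
Proof. by rewrite /rtrans (eq_imset _ (@rcoset1 _)) imset_id. Qed.

Lemma rtransM M g h : rtrans (rtrans M g) h = rtrans M (g * h).
Proof. by rewrite /rtrans -imset_comp; apply: eq_imset => e /=; rewrite rcosetM. Qed.

Lemma card_rtrans T g : #|rtrans T g| = #|T|.
Proof. by rewrite card_imset //; apply: rcoset_inj. Qed.

Lemma card_rtransI T M g : #|rtrans T g :&: M| = #|T :&: rtrans M g^-1|.
Proof.
rewrite -{1}(rtrans1 M) -(mulVg g) -rtransM /rtrans -imsetI; last first.
  by move=> e e' _ _; apply: rcoset_inj.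
by rewrite card_imset //; apply: rcoset_inj.
Qed.

Lemma G_regular_gen (A : {set gT}) F : <<A>> = [set: gT] ->
  (forall M g, M \in F -> g \in A -> rtrans M g \in F) -> G_regular F.
Proof.
move=> genA FA M g MF.
suff /forall_inP : [forall M in F, rtrans M g \in F] by apply.
move: g; apply: (gen_ind_setT (P := fun g => [forall M in F, rtrans M g \in F]) genA).
- by apply/forall_inP => M' M'F; rewrite rtrans1.
- move=> g h /forall_inP Fg /forall_inP Fh; apply/forall_inP => M' M'F.
  by rewrite -rtransM; apply/Fh/Fg.
- by move=> g gA; apply/forall_inP => M' M'F; apply: FA.
Qed.

End Translations.

Section ParentTrees.
Variable gT : finGroupType.

Lemma adj_sym (T : {set {set gT}}) : symmetric (adj T).
Proof. by move=> x y; rewrite /adj eq_sym setUC. Qed.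

Definition parent_tree (r : gT) (p : gT -> gT) : {set {set gT}} :=
  [set [set v; p v] | v in [set~ r]].

Variables (r : gT) (p : gT -> gT) (d : gT -> nat).
Hypothesis depth_p : forall v, v != r -> (d (p v) < d v)%N.
Local Notation T := (parent_tree r p).

Lemma parent_neq v : v != r -> v != p v.
Proof. by move=> /depth_p dv; apply/eqP => E; rewrite -E ltnn in dv. Qed.

Lemma parent_tree_sub : T \subset Kedges gT.
Proof.
by apply/subsetP => e /imsetP [v]; rewrite !inE => vr ->; rewrite cards2 parent_neq.
Qed.

Lemma connect_root x : connect (adj T) x r.
Proof.
elim: {x}(d x) {-2}x (leqnn (d x)) => [|n IHn] x dx; case: (eqVneq x r) => [-> //|xr].
  by move: (depth_p xr); rewrite leqn0 in dx; rewrite (eqP dx).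
apply: connect_trans (IHn (p x) _); last by rewrite -ltnS (leq_trans (depth_p xr)).
apply: connect1; rewrite /adj parent_neq //=.
by apply/imsetP; exists x; rewrite ?inE.
Qed.

Lemma parent_tree_connected : connected T.
Proof.
move=> x y; apply: connect_trans (connect_root x) _.
by rewrite (sym_connect_sym (@adj_sym _)) connect_root.
Qed.

Lemma adj_parent_tree v u : adj T v u -> (d u <= d v)%N -> u = p v.
Proof.
case/andP => vu /imsetP [w]; rewrite !inE => wr /eq_set2 -/(_ (parent_neq wr)).
by case=> [[-> ->] //|[-> ->]]; move: (depth_p wr); rewrite ltnNge => /negP.
Qed.

(* A deepest vertex of a cycle would have two distinct neighbours on it, both
   equal to its parent. *)
Lemma parent_tree_acyclic : acyclic T.
Proof.
move=> c size_c /andP [cyc_c uniq_c].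
have [x0 x0c] : exists x0, x0 \in c.
  by case: c size_c {cyc_c uniq_c} => // x c _; exists x; rewrite inE eqxx.
pose v := [arg max_(x > x0 in c) d x].
have [vc vmax] : v \in c /\ forall y, y \in c -> (d y <= d v)%N.
  by rewrite /v; case: arg_maxnP => // x xc H; split => // y yc; apply: H.
case: (rot_to vc) => i c' E.
have : ucycle (adj T) (v :: c') by rewrite -E rot_ucycle /ucycle cyc_c uniq_c.
have : size (v :: c') = size c by rewrite -E size_rot.
have cv y : y \in v :: c' -> y \in c by rewrite -E mem_rot.
case: c' E cv => [|u1 [|u2 c3]] E cv; try by move=> sz; rewrite -sz in size_c.
move=> _ /andP []; rewrite (cycle_path v) /= => /andP [a2 /andP [a1 _]].
rewrite !inE !negb_or => /andP [_ /andP [/andP [u1u2 u1c3] _]].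
have u1c : u1 \in c by apply: cv; rewrite !inE eqxx orbT.
have lastc : last u2 c3 \in c by apply: cv; rewrite (in_cons v) (in_cons u1) mem_last !orbT.
have e1 := adj_parent_tree a1 (vmax _ u1c).
rewrite adj_sym in a2; have e2 := adj_parent_tree a2 (vmax _ lastc).
have : u1 \notin u2 :: c3 by rewrite inE negb_or u1u2.
by rewrite e1 -e2 mem_last.
Qed.

Lemma parent_tree_spanning : spanning_tree T.
Proof.
split; first exact: parent_tree_sub.
by split; [exact: parent_tree_connected | exact: parent_tree_acyclic].
Qed.

Lemma card_parent_tree : #|T| = #|gT|.-1.
Proof.
rewrite card_in_imset; first by rewrite cardsC1.
move=> x y; rewrite !inE => xr yr /eq_set2 -/(_ (parent_neq yr)) [[] //|[xE yE]].
by move: (depth_p xr) (depth_p yr); rewrite -xE yE; lia.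
Qed.

End ParentTrees.

Section TranslatedParentTrees.
Variable gT : finGroupType.
Local Open Scope group_scope.

Lemma rtrans_parent_tree (r g : gT) p :
  rtrans (parent_tree r p) g = parent_tree (r * g) (fun u => p (u * g^-1) * g).
Proof.
apply/setP => e; apply/imsetP/imsetP.
  case=> f /imsetP [v]; rewrite !inE => vr -> ->.
  exists (v * g); first by rewrite !inE (can_eq (mulgK g)).
  by rewrite rcoset_set2 mulgK.
case=> v; rewrite !inE => vr ->.
exists [set v * g^-1; p (v * g^-1)].
  by apply: imset_f; rewrite !inE -(can_eq (mulgK g)) mulgKV.
by rewrite rcoset_set2 mulgKV.
Qed.

Lemma rtrans_parent_tree_spanning (r : gT) p (d : gT -> nat) g :
  (forall v, v != r -> (d (p v) < d v)%N) -> spanning_tree (rtrans (parent_tree r p) g).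
Proof.
move=> depth_p; rewrite rtrans_parent_tree.
apply: (parent_tree_spanning (d := fun u => d (u * g^-1))) => v vr.
by rewrite mulgK; apply: depth_p; apply: contra vr => /eqP <-; rewrite mulgKV.
Qed.

End TranslatedParentTrees.

Section InvolutionFactorizations.
Variables (gT : finGroupType) (L : finType) (V : {set L}) (pi : L -> gT -> gT).
Local Open Scope group_scope.
Hypothesis pi_neq : forall l x, l \in V -> x != pi l x.
Hypothesis piK : forall l x, l \in V -> pi l (pi l x) = x.
Hypothesis pi_connect : forall x y, x != y -> exists2 l, l \in V & pi l x = y.
Hypothesis pi_inj : forall l l' x, l \in V -> l' \in V -> pi l x = pi l' x -> l = l'.

Definition factor l : {set {set gT}} := [set [set x; pi l x] | x : gT].
Definition factorization : {set {set {set gT}}} := [set factor l | l in V].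

Lemma factor_edge l x : [set x; pi l x] \in factor l.
Proof. exact: imset_f. Qed.

Lemma edge_factor l x y : l \in V -> [set x; y] \in factor l -> pi l x = y.
Proof.
move=> lV /imsetP [z _ /eq_set2 -/(_ (pi_neq z lV))].
by case=> [[-> ->] //|[-> ->]]; rewrite piK.
Qed.

Lemma factor_one_factor l : l \in V -> one_factor (factor l).
Proof.
move=> lV; split.
  by apply/subsetP => e /imsetP [x _ ->]; rewrite inE cards2 pi_neq.
move=> x; apply/eqP/cards1P; exists [set x; pi l x]; apply/setP => e.
rewrite !inE; apply/andP/eqP => [[/imsetP [z _ ->]]|->]; last by rewrite factor_edge set21.
by rewrite !inE => /orP [] /eqP -> //; rewrite piK // setUC.
Qed.

Lemma factor_inj : {in V &, injective factor}.
Proof.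
move=> l l' lV l'V E; apply: (@pi_inj l l' 1) => //.
by apply: edge_factor => //; rewrite E factor_edge.
Qed.

Lemma factorization_one_factorization : one_factorization factorization.
Proof.
split; last by move=> M /imsetP [l lV ->]; apply: factor_one_factor.
apply/and3P; split.
- rewrite eqEsubset; apply/andP; split.
    apply/subsetP => e /bigcupP [M /imsetP [l lV ->]].
    by apply/subsetP; case: (factor_one_factor lV).
  apply/subsetP => e; rewrite inE => /cards2P [x [y [xy ->]]].
  case: (pi_connect xy) => l lV <-; apply/bigcupP; exists (factor l); first exact: imset_f.
  exact: factor_edge.
- apply/trivIsetP => A B /imsetP [l lV ->] /imsetP [l' l'V ->] ne.
  apply/pred0P => e /=; apply/negbTE/negP => /andP [/imsetP [x _ ->]] /(edge_factor l'V) E'.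
  by move: ne; rewrite (pi_inj l'V lV E') eqxx.
- by apply/imsetP => [[l lV E]]; have := factor_edge l 1; rewrite -E inE.
Qed.

Lemma card_factorization : #|factorization| = #|V|.
Proof. exact: card_in_imset factor_inj. Qed.

Lemma rtrans_factor l l' g : (forall x, pi l' (x * g) = pi l x * g) ->
  rtrans (factor l) g = factor l'.
Proof.
move=> pi_g; apply/setP => e; apply/imsetP/imsetP.
  by case=> f /imsetP [x _ ->] ->; exists (x * g) => //; rewrite rcoset_set2 pi_g.
case=> x _ ->; exists [set x * g^-1; pi l (x * g^-1)]; first exact: factor_edge.
by rewrite rcoset_set2 -pi_g mulgKV.
Qed.

End InvolutionFactorizations.

Section ModularArithmetic.
Variable s : nat.
Local Notation m := (2 * s)%N.

Definition addm i j := if i + j < m then i + j else i + j - m.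

(* Only used with [j <= m]; larger [j] give the junk value [0]. *)
Definition subm i j := if j <= i then i - j else if j <= i + m then i + m - j else 0.

Lemma addm_spec i j :
  (i + j < m /\ addm i j = i + j) \/ (m <= i + j /\ addm i j + m = i + j).
Proof. by rewrite /addm; case: ifP => ?; [left | right]; split => //; lia. Qed.

Lemma subm_spec i j :
  [\/ j <= i /\ subm i j + j = i, i < j <= i + m /\ subm i j + j = i + m
    | i + m < j /\ subm i j = 0].
Proof.
rewrite /subm; case: ifP => ?; [apply: Or31 | case: ifP => ?; [apply: Or32 | apply: Or33]];
  by split => //; lia.
Qed.

End ModularArithmetic.

Ltac noif t := match t with context [if _ then _ else _] => fail 1 | _ => idtac end.

Ltac split_mod :=
  match goal with
  | |- context [addm ?S ?X ?Y] => noif X; noif Y; let r := fresh "r" in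
      case: (addm_spec S X Y) => [[? ?]|[? ?]]; set (r := addm S X Y) in *; clearbody r
  | H : context [addm ?S ?X ?Y] |- _ => noif X; noif Y; let r := fresh "r" in
      case: (addm_spec S X Y) => [[? ?]|[? ?]]; set (r := addm S X Y) in *; clearbody r
  | |- context [subm ?S ?X ?Y] => noif X; noif Y; let r := fresh "r" in
      case: (subm_spec S X Y) => [[? ?]|[? ?]|[? ?]]; set (r := subm S X Y) in *; clearbody r
  | H : context [subm ?S ?X ?Y] |- _ => noif X; noif Y; let r := fresh "r" in
      case: (subm_spec S X Y) => [[? ?]|[? ?]|[? ?]]; set (r := subm S X Y) in *; clearbody r
  end; try (exfalso; lia).

Ltac split_if :=
  match goal with |- context [if ?c then _ else _] => noif c; let E := fresh "E" in case E: c end.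

Ltac close_arith :=
  intros; try match goal with |- ~ _ => intro end; rewrite /= ?xpair_eqE /=;
  try match goal with H : (_, _) = (_, _) |- _ => case: H => * end;
  first [ done | (congr pair; lia) | lia | (exfalso; lia) ].

Ltac crunch := repeat (simpl; intros; first [split_mod | split_if]); close_arith.

Section DicyclicCombinatorics.
Variable s : nat.
Hypothesis s_ge2 : 2 <= s.
Local Notation m := (2 * s)%N.
Local Notation addm := (addm s).
Local Notation subm := (subm s).

(* A coordinate [(e, i)] stands for the element [b ^+ e * a ^+ i] of the dicyclic
   group, a label [(t, j)] for a 1-factor, described by the partner [mate (t, j) c]
   of each vertex [c].  Label [(false, j)] reflects each coset of [<[a]>],
   [a^i <-> a^(j-i)] and [b a^i <-> b a^(j+s-i)], except that the vertices this
   reflection fixes or sends to their antipode are matched across,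
   [a^i <-> b a^(j-i)]; label [(true, 0)] is [x <-> x a^s]; label [(true, j)]
   with [j != s] is [a^i <-> b a^(i+j)]. *)
Definition mate (l c : bool * nat) : bool * nat :=
  let (t, j) := l in let (e, i) := c in
  if t then
    (if j == 0 then (e, addm i s) else if e then (false, subm i j) else (true, addm i j))
  else if e then
    (let w := subm (addm j s) i in
     if (w == i) || (w == addm i s) then (false, subm j i) else (true, w))
  else
    (let w := subm j i in
     if (w == i) || (w == addm i s) then (true, w) else (false, w)).

Definition label_ok (l : bool * nat) := (l.2 < m) && (l.1 ==> (l.2 != s)).

Lemma mate_lt l c : label_ok l -> c.2 < m -> (mate l c).2 < m.
Proof. by case: l c => [[] j] [[] i]; rewrite /label_ok /= => /andP [jm H] im; crunch. Qed.

Lemma mateK l c : label_ok l -> c.2 < m -> mate l (mate l c) = c.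
Proof. by case: l c => [[] j] [[] i]; rewrite /label_ok /= => /andP [jm H] im; crunch. Qed.

Lemma mate_neq l c : label_ok l -> c.2 < m -> mate l c <> c.
Proof. by case: l c => [[] j] [[] i]; rewrite /label_ok /= => /andP [jm H] im; crunch. Qed.

Definition label_of (c c' : bool * nat) : bool * nat :=
  let (e, i) := c in let (f, k) := c' in
  if e == f then
    (if k == addm i s then (true, 0)
     else if e then (false, subm (addm i k) s) else (false, addm i k))
  else
    (let d := if e then subm i k else subm k i in
     if (d == 0) || (d == s) then (false, addm i k) else (true, d)).

Lemma label_of_ok c c' : c.2 < m -> c'.2 < m -> label_ok (label_of c c').
Proof. by case: c c' => [[] i] [[] k] /= im km; rewrite /label_ok; apply/andP; split; crunch. Qed.

Lemma mate_label_of c c' : c.2 < m -> c'.2 < m -> c <> c' -> mate (label_of c c') c = c'.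
Proof.
case: c c' => [[] i] [[] k] /= im km H;
  try (have {}H : i != k by apply/eqP => E; apply: H; rewrite E).
all: crunch.
Qed.

Lemma label_of_mate l c : label_ok l -> c.2 < m -> label_of c (mate l c) = l.
Proof. by case: l c => [[] j] [[] i]; rewrite /label_ok /= => /andP [jm H] im; crunch. Qed.

Definition rmul_a (c : bool * nat) : bool * nat := (c.1, addm c.2 1).
Definition rmul_b (c : bool * nat) : bool * nat :=
  if c.1 then (false, subm s c.2) else (true, subm 0 c.2).
Definition label_rmul_a (l : bool * nat) : bool * nat := if l.1 then l else (false, addm l.2 2).
Definition label_rmul_b (l : bool * nat) : bool * nat :=
  if l.1 then (true, if l.2 == 0 then 0 else addm l.2 s) else (false, subm s l.2).

Lemma mate_rmul_a l c : label_ok l -> c.2 < m ->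
  mate (label_rmul_a l) (rmul_a c) = rmul_a (mate l c).
Proof.
case: l c => [[] j] [[] i]; rewrite /label_ok /= => /andP [jm H] im; rewrite /rmul_a /label_rmul_a.
all: crunch.
Qed.

Lemma mate_rmul_b l c : label_ok l -> c.2 < m ->
  mate (label_rmul_b l) (rmul_b c) = rmul_b (mate l c).
Proof.
case: l c => [[] j] [[] i]; rewrite /label_ok /= => /andP [jm H] im; rewrite /rmul_b /label_rmul_b.
all: crunch.
Qed.

Lemma label_rmul_a_ok l : label_ok l -> label_ok (label_rmul_a l).
Proof. case: l => [[] j]; rewrite /label_ok /= => /andP [jm H]; rewrite /label_rmul_a.
all: by apply/andP; split; crunch.
Qed.

Lemma label_rmul_b_ok l : label_ok l -> label_ok (label_rmul_b l).
Proof. case: l => [[] j]; rewrite /label_ok /= => /andP [jm H]; rewrite /label_rmul_b.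
all: by apply/andP; split; crunch.
Qed.

Lemma rmul_a_lt c : c.2 < m -> (rmul_a c).2 < m.
Proof. by case: c => e i /= im; crunch. Qed.

Lemma rmul_b_lt c : c.2 < m -> (rmul_b c).2 < m.
Proof. by case: c => [[] i] /= im; rewrite /rmul_b; crunch. Qed.

(* Two spanning trees rooted at [(false, 0)]; [eps = true] re-hangs [a^s] and
   [b a^(s+1)], since otherwise the translates of one tree by [a^k] and [a^(k+s)]
   would share the edge [{a^k, a^(k+s)}]. *)
Definition parent (eps : bool) (c : bool * nat) : bool * nat :=
  let (e, i) := c in
  if eps && ~~ e && (i == s) then (true, s.+1) else
  if eps && e && (i == s.+1) then (true, 1) else
  if ~~ e then
    (if (1 <= i) && (i <= s) then (false, 0) else if i == m - 1 then (true, s) else (true, 0))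
  else if (i == 0) || (i == s) || (s + 2 <= i) then (false, 0)
  else if i == s.+1 then (false, s) else (true, 0).

Definition depth (eps : bool) (c : bool * nat) : nat :=
  let (e, i) := c in
  if eps && ~~ e && (i == s) then 4 else
  if eps && e && (i == s.+1) then 3 else
  if ~~ e then (if i == 0 then 0 else if i <= s then 1 else 2)
  else (if (i == 0) || (i == s) || (s + 2 <= i) then 1 else 2).

Lemma parent_lt eps c : c.2 < m -> (parent eps c).2 < m.
Proof. by case: eps; case: c => [[] i] /= im; crunch. Qed.

Lemma depth_parent eps c : c.2 < m -> c <> (false, 0) ->
  depth eps (parent eps c) < depth eps c.
Proof.
case: eps; case: c => [[] i] /= im H //=;
  try (have {}H : i != 0 by apply/eqP => E; apply: H; rewrite E).
all: crunch.
Qed.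

Definition rainbow_vertex (eps : bool) (l : bool * nat) : bool * nat :=
  let (t, j) := l in
  if t then
    (if j == 0 then (if eps then (true, s.+1) else (false, s))
     else if j == 1 then (if eps then (false, s) else (true, s.+1))
     else if j < s then (false, m - j)
     else if j == s.+1 then (false, m - 1)
     else (true, j))
  else if j == 0 then (true, 0) else if j < s then (false, j)
  else if j == s then (true, s) else (true, j - s).

Lemma rainbow_vertex_lt eps l : label_ok l -> (rainbow_vertex eps l).2 < m.
Proof. by case: eps; case: l => [[] j]; rewrite /label_ok /= => /andP [jm H]; crunch. Qed.

Lemma rainbow_vertex_neq_root eps l : label_ok l -> rainbow_vertex eps l <> (false, 0).
Proof. by case: eps; case: l => [[] j]; rewrite /label_ok /= => /andP [jm H]; crunch. Qed.

Lemma mate_rainbow_vertex eps l : label_ok l ->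
  mate l (rainbow_vertex eps l) = parent eps (rainbow_vertex eps l).
Proof. by case: eps; case: l => [[] j]; rewrite /label_ok /= => /andP [jm H]; crunch. Qed.

Definition shift (c : bool * nat) (k : nat) : bool * nat := (c.1, addm c.2 k).

Definition translated_tree_edge (k : nat) (w u v : bool * nat) :=
  [&& k < m, w.2 < m, w != (false, 0) &
     ((shift w k == u) && (shift (parent (s <= k) w) k == v)) ||
     ((shift w k == v) && (shift (parent (s <= k) w) k == u))].

Lemma translated_tree_edgeC k w u v :
  translated_tree_edge k w u v = translated_tree_edge k w v u.
Proof. by rewrite /translated_tree_edge orbC. Qed.

Definition cross_edge_tree i k : nat * (bool * nat) :=
  let d := subm k i in
  if d == 0 then (i, (true, 0)) else if d == s then (i, (true, s))
  else if s + 2 <= d then (i, (true, d))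
  else if d == 1 then (let k' := subm i s in (k', if k' < s then (true, s.+1) else (false, s)))
  else if d < s then (k, (false, m - d))
  else (addm i 1, (false, m - 1)).

Definition coset_edge_tree (e : bool) i k : nat * (bool * nat) :=
  let d := subm k i in
  if d == s then
    (if e then ((if i == 0 then m - 1 else if i <= s then i - 1 + s else i - 1), (true, s.+1))
     else ((if i < s then i else i - s), (false, s)))
  else if d < s then (i, (e, d)) else (k, (e, subm i k)).

Lemma cross_edge_treeP i k : i < m -> k < m ->
  translated_tree_edge (cross_edge_tree i k).1 (cross_edge_tree i k).2 (false, i) (true, k).
Proof. by move=> im km; rewrite /translated_tree_edge /shift /cross_edge_tree; crunch. Qed.

Lemma coset_edge_treeP (e : bool) i k : i < m -> k < m -> i != k ->
  translated_tree_edge (coset_edge_tree e i k).1 (coset_edge_tree e i k).2 (e, i) (e, k).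
Proof.
by move=> im km ik; rewrite /translated_tree_edge /shift /coset_edge_tree; case: e; crunch.
Qed.

Definition edge_tree (u v : bool * nat) : nat * (bool * nat) :=
  let (e, i) := u in let (f, k) := v in
  if e == f then coset_edge_tree e i k else if e then cross_edge_tree k i else cross_edge_tree i k.

Lemma edge_treeP u v : u.2 < m -> v.2 < m -> u <> v ->
  translated_tree_edge (edge_tree u v).1 (edge_tree u v).2 u v.
Proof.
case: u v => [[] i] [[] k] /= im km uv.
- by apply: coset_edge_treeP => //; apply: contra_not_neq uv => ->.
- by rewrite translated_tree_edgeC; apply: cross_edge_treeP.
- exact: cross_edge_treeP.
- by apply: coset_edge_treeP => //; apply: contra_not_neq uv => ->.
Qed.

End DicyclicCombinatorics.

Section Dicyclic.
Variables (gT : finGroupType) (s : nat) (a b : gT).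
Local Open Scope group_scope.
Hypothesis s_ge2 : (2 <= s)%N.
Hypothesis card_gT : #|gT| = (4 * s)%N.
Hypothesis gen_ab : <<[set a; b]>> = [set: gT].
Hypothesis a_order : a ^+ (2 * s) = 1.
Hypothesis b_sq : b ^+ 2 = a ^+ s.
Hypothesis b_conj_a : b^-1 * a * b = a^-1.
Local Notation m := (2 * s)%N.

Lemma m_gt0 : (0 < m)%N. Proof. lia. Qed.

Definition elt (c : bool * nat) : gT := b ^+ c.1 * a ^+ c.2.

Lemma expa_addm i j : a ^+ addm s i j = a ^+ i * a ^+ j.
Proof.
rewrite -expgD /addm; case: ifP => // /negbT; rewrite -leqNgt => /subnK {2}<-.
by rewrite expgD a_order mulg1.
Qed.

Lemma expa_subm i j : (j <= m)%N -> a ^+ subm s i j = a ^+ i * (a ^+ j)^-1.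
Proof.
move=> jm; rewrite /subm; case: ifP => [/subnK {2}<-|_]; first by rewrite expgD mulgK.
rewrite (leq_trans jm (leq_addl _ _)); apply: (mulIg (a ^+ j)).
by rewrite mulgKV -expgD subnK ?(leq_trans jm (leq_addl _ _)) // expgD a_order mulg1.
Qed.

Lemma expa_mulb i : a ^+ i * b = b * (a ^+ i)^-1.
Proof.
have conj_a : a ^ b = a^-1 by rewrite /conjg mulgA b_conj_a.
by rewrite -expgVn -conj_a -conjXg /conjg mulKVg.
Qed.

Lemma elt_rmul_a c : (c.2 < m)%N -> elt c * a = elt (rmul_a s c).
Proof. by case: c => e i _; rewrite /elt -mulgA expa_addm expg1. Qed.

Lemma elt_rmul_b c : (c.2 < m)%N -> elt c * b = elt (rmul_b s c).
Proof.
case: c => [[] i] /= /ltnW im; rewrite /elt /rmul_b /= -mulgA expa_mulb expa_subm //.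
  by rewrite expg1 mulgA -expg2 b_sq expg0 mul1g.
by rewrite expg0 !mul1g expg1.
Qed.

Lemma elt_shift c k : elt c * a ^+ k = elt (shift s c k).
Proof. by case: c => e i; rewrite /elt /shift -mulgA expa_addm. Qed.

Definition unord (c : bool * 'I_m) : bool * nat := (c.1, val c.2).
Definition ord_elt (c : bool * 'I_m) : gT := elt (unord c).

Lemma elt_codom c : (c.2 < m)%N -> elt c \in codom ord_elt.
Proof. by case: c => e i im; apply/codomP; exists (e, Ordinal im). Qed.

Lemma ord_elt_onto x : x \in codom ord_elt.
Proof.
pose P g := [forall c, ord_elt c * g \in codom ord_elt].
suff /forallP /(_ (false, Ordinal m_gt0)) : P x by rewrite /ord_elt /elt /= !mul1g.
move: x; apply: (gen_ind_setT gen_ab).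
- by apply/forallP => c; rewrite mulg1 codom_f.
- move=> g h /forallP Pg /forallP Ph; apply/forallP => c.
  by case/codomP: (Pg c) => c' E; rewrite mulgA E.
- move=> g; rewrite !inE => /orP [] /eqP -> ; apply/forallP => -[e i]; rewrite [ord_elt _]/ord_elt.
    by rewrite elt_rmul_a ?elt_codom ?rmul_a_lt ?ltn_ord.
  by rewrite elt_rmul_b ?elt_codom ?rmul_b_lt ?ltn_ord.
Qed.

Lemma ord_elt_inj : injective ord_elt.
Proof.
have : #|codom ord_elt| == #|{: bool * 'I_m}|.
  have -> : #|codom ord_elt| = #|gT| by apply: eq_card => x; rewrite ord_elt_onto.
  by rewrite card_gT card_prod card_bool card_ord; apply/eqP; lia.
by move/image_injP => inj x y; apply: inj.
Qed.

Definition coord (x : gT) : bool * nat := unord (iinv (ord_elt_onto x)).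

Lemma coordK x : elt (coord x) = x. Proof. exact: (f_iinv (ord_elt_onto x)). Qed.
Lemma coord_lt x : ((coord x).2 < m)%N. Proof. exact: ltn_ord. Qed.

Lemma eltK c : (c.2 < m)%N -> coord (elt c) = c.
Proof.
case: c => e i im; rewrite /coord.
by rewrite -[elt _]/(ord_elt (e, Ordinal im)) (iinv_f ord_elt_inj).
Qed.

Lemma coord_inj x y : coord x = coord y -> x = y.
Proof. by move=> E; rewrite -(coordK x) E coordK. Qed.

Lemma coord1 : coord 1 = (false, 0%N).
Proof. by rewrite -(eltK (c := (false, 0%N))) ?m_gt0 // /elt !expg0 mulg1. Qed.

Definition labels : {set bool * 'I_m} := [set l | label_ok s (unord l)].
Definition mate_elt (l : bool * 'I_m) (x : gT) : gT := elt (mate s (unord l) (coord x)).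

Lemma coord_mate_elt l x : l \in labels -> coord (mate_elt l x) = mate s (unord l) (coord x).
Proof. by rewrite inE => lok; rewrite eltK // mate_lt // coord_lt. Qed.

Lemma mate_elt_neq l x : l \in labels -> x != mate_elt l x.
Proof.
move=> lV; apply/eqP => /(congr1 coord); rewrite coord_mate_elt //.
by move: lV; rewrite inE => lok /esym; apply: mate_neq lok (coord_lt x).
Qed.

Lemma mate_eltK l x : l \in labels -> mate_elt l (mate_elt l x) = x.
Proof.
move=> lV; rewrite {1}/mate_elt coord_mate_elt //.
by move: lV; rewrite inE => lok; rewrite mateK ?coord_lt ?coordK.
Qed.

Lemma unord_onto l : label_ok s l -> exists2 l', l' \in labels & unord l' = l.
Proof.
by case: l => t j lok; case/andP: (lok) => /= jm _; exists (t, Ordinal jm); rewrite ?inE.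
Qed.

Lemma mate_elt_connect x y : x != y -> exists2 l, l \in labels & mate_elt l x = y.
Proof.
move=> xy; have cxy : coord x <> coord y by move/coord_inj => E; rewrite E eqxx in xy.
have [l lV El] := unord_onto (label_of_ok s_ge2 (coord_lt x) (coord_lt y)).
by exists l; rewrite // /mate_elt El mate_label_of ?coord_lt // coordK.
Qed.

Lemma mate_elt_inj l l' x : l \in labels -> l' \in labels -> mate_elt l x = mate_elt l' x -> l = l'.
Proof.
rewrite !inE => lok l'ok /(congr1 coord); rewrite !coord_mate_elt ?inE // => E.
have : unord l = unord l'.
  by rewrite -(label_of_mate s_ge2 lok (coord_lt x)) E label_of_mate ?coord_lt.
by case: l l' {lok l'ok E} => t j [t' j'] [-> /val_inj ->].
Qed.

Local Notation factors := (factorization labels mate_elt).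

Lemma factors_one_factorization : one_factorization factors.
Proof.
exact: factorization_one_factorization mate_elt_neq mate_eltK mate_elt_connect mate_elt_inj.
Qed.

Lemma card_factors : #|factors| = (4 * s).-1.
Proof.
have s_lt_m : (s < m)%N by lia.
rewrite (card_factorization mate_elt_neq mate_eltK mate_elt_inj).
have -> : labels = [set~ (true, Ordinal s_lt_m)].
  apply/setP => -[t j]; rewrite !inE /label_ok /= ltn_ord xpair_eqE -val_eqE /=.
  by case: t.
by rewrite cardsC1 card_prod card_bool card_ord; congr predn; lia.
Qed.

Lemma rtrans_factors g rg lg :
  (forall c, (c.2 < m)%N -> elt c * g = elt (rg c)) ->
  (forall c, (c.2 < m)%N -> ((rg c).2 < m)%N) ->
  (forall l, label_ok s l -> label_ok s (lg l)) ->
  (forall l c, label_ok s l -> (c.2 < m)%N -> mate s (lg l) (rg c) = rg (mate s l c)) ->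
  forall M, M \in factors -> rtrans M g \in factors.
Proof.
move=> elt_g rg_lt lg_ok mate_g _ /imsetP [l lV ->].
have lok : label_ok s (unord l) by rewrite inE in lV.
have [l' l'V El'] := unord_onto (lg_ok _ lok).
apply/imsetP; exists l' => //; apply: rtrans_factor => x.
rewrite /mate_elt -{1}(coordK x) elt_g ?coord_lt // eltK ?rg_lt ?coord_lt //.
by rewrite El' mate_g ?coord_lt // elt_g // mate_lt ?coord_lt.
Qed.

Lemma factors_regular : G_regular factors.
Proof.
apply: (G_regular_gen gen_ab) => M g MF; rewrite !inE => /orP [] /eqP -> {g}.
  apply: rtrans_factors MF;
    [exact: elt_rmul_a | exact: rmul_a_lt | exact: label_rmul_a_ok | exact: mate_rmul_a].
apply: rtrans_factors MF;
  [exact: elt_rmul_b | exact: rmul_b_lt | exact: label_rmul_b_ok | exact: mate_rmul_b].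
Qed.

Definition parent_elt eps (x : gT) : gT := elt (parent s eps (coord x)).
Definition base_tree eps : {set {set gT}} := parent_tree 1 (parent_elt eps).
Definition tree (k : 'I_m) : {set {set gT}} := rtrans (base_tree (s <= k)%N) (a ^+ k).

Lemma depth_parent_elt eps v : v != 1 ->
  (depth s eps (coord (parent_elt eps v)) < depth s eps (coord v))%N.
Proof.
move=> v1; rewrite /parent_elt eltK ?parent_lt ?coord_lt //.
apply: (depth_parent s_ge2 _ (coord_lt v)) => E.
by move: v1; rewrite -(coordK v) E /elt /= !expg0 mulg1 eqxx.
Qed.

Lemma tree_spanning k : spanning_tree (tree k).
Proof. exact: rtrans_parent_tree_spanning (depth_parent_elt _). Qed.

Lemma card_tree k : #|tree k| = (4 * s).-1.
Proof. by rewrite card_rtrans (card_parent_tree (depth_parent_elt _)) card_gT. Qed.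

Lemma base_tree_meet eps M : M \in factors -> base_tree eps :&: M != set0.
Proof.
case/imsetP => l lV ->; have lok : label_ok s (unord l) by rewrite inE in lV.
pose v := elt (rainbow_vertex s eps (unord l)).
have cv : coord v = rainbow_vertex s eps (unord l) by rewrite eltK ?rainbow_vertex_lt.
apply/set0Pn; exists [set v; mate_elt l v]; rewrite inE factor_edge andbT.
apply/imsetP; exists v.
  by rewrite !inE -(inj_eq coord_inj) cv coord1; apply/eqP/rainbow_vertex_neq_root.
by rewrite /parent_elt /mate_elt cv mate_rainbow_vertex.
Qed.

Lemma tree_rainbow k : rainbow_spanning_tree factors (tree k).
Proof.
split=> [|M MF]; first exact: tree_spanning.
rewrite card_rtransI; apply: (partition_meet_card1 (proj1 factors_one_factorization)).
- exact: parent_tree_sub (depth_parent_elt _).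
- by rewrite (card_parent_tree (depth_parent_elt _)) card_factors card_gT.
- by move=> M' M'F; apply: base_tree_meet.
- exact: factors_regular.
Qed.

Lemma tree_edge k (km : (k < m)%N) w x y : (w.2 < m)%N -> w != (false, 0%N) ->
  shift s w k = coord x -> shift s (parent s (s <= k) w) k = coord y ->
  [set x; y] \in tree (Ordinal km).
Proof.
move=> wm w0 Ex Ey; apply/imsetP; exists [set elt w; parent_elt (s <= k) (elt w)].
  by apply/imsetP; exists (elt w) => //; rewrite !inE -(inj_eq coord_inj) eltK // coord1.
by rewrite rcoset_set2 /parent_elt eltK // !elt_shift Ex Ey !coordK.
Qed.

Lemma tree_cover e : e \in Kedges gT -> exists k, e \in tree k.
Proof.
rewrite inE => /cards2P [x [y [xy ->]]].
have cxy : coord x <> coord y by move/coord_inj => E; rewrite E eqxx in xy.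
case/and4P: (edge_treeP s_ge2 (coord_lt x) (coord_lt y) cxy) => km wm w0.
case/orP => /andP [/eqP Ex /eqP Ey]; exists (Ordinal km); first exact: tree_edge wm w0 Ex Ey.
by rewrite setUC; apply: tree_edge wm w0 Ex Ey.
Qed.

Lemma sum_card_tree : (\sum_(k : 'I_m) #|tree k| = #|Kedges gT|)%N.
Proof.
rewrite (eq_bigr _ (fun k _ => card_tree k)) sum_nat_const card_ord.
rewrite /Kedges card_draws card_gT bin2.
have -> : (4 * s = m.*2)%N by rewrite -mul2n mulnA.
by rewrite -doubleMl half_double.
Qed.

Lemma trees_complete : complete_rainbow_set factors [set tree k | k : 'I_m].
Proof.
split=> [|_ /imsetP [k _ ->]]; last exact: tree_rainbow.
apply: partition_of_cover sum_card_tree => [k | k | e /tree_cover //].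
  by case: (tree_spanning k).
by rewrite -card_gt0 card_tree; lia.
Qed.

Lemma dicyclic_rainbow_factorization :
  exists F : {set {set {set gT}}},
    one_factorization F /\ G_regular F /\ exists S, complete_rainbow_set F S.
Proof.
exists factors; split; first exact: factors_one_factorization.
by split; [exact: factors_regular | exists [set tree k | k : 'I_m]; exact: trees_complete].
Qed.

End Dicyclic.

Theorem proposition2p1 (gT : finGroupType) (s : nat) :
  (2 <= s)%N -> dicyclic gT s ->
  exists F : {set {set {set gT}}},
    one_factorization F /\ G_regular F /\
    exists S : {set {set {set gT}}}, complete_rainbow_set F S.
Proof.
move=> s_ge2 [card_gT [a [b [gen_ab [a_order [b_sq b_conj_a]]]]]].
exact: dicyclic_rainbow_factorization s_ge2 card_gT gen_ab a_order b_sq b_conj_a.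
Qed.
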